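(* Let $G=(V,E)$ be a finite graph with maximum vertex degree $\Delta(G)$, and let $A$ be an abelian group. If $|A|>|V|+|E|\,\Delta(G)-1$, then $G$ is $A$-cordial.
   Context: Graphs are finite, simple and undirected. For an abelian group $A$ and a graph $G=(V,E)$, a vertex labeling $\ell:V\to A$ induces an edge labeling $\ell(\{v_1,v_2\})=\ell(v_1)+\ell(v_2)$. Let $f_V(a)=|\{v\in V:\ell(v)=a\}|$ and $f_E(a)=|\{e\in E:\ell(e)=a\}|$. The labeling is $A$-cordial if $|f_V(a_1)-f_V(a_2)|\le 1$ and $|f_E(a_1)-f_E(a_2)|\le 1$ for all $a_1,a_2\in A$; $G$ is $A$-cordial if it admits an $A$-cordial labeling. *)

From mathcomp Require Import all_boot all_order all_algebra.
Set Implicit Arguments. Unset Strict Implicit. Unset Printing Implicit Defensive.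
Import GRing.Theory.
Local Open Scope ring_scope.

Definition simple_graph (T : finType) (e : rel T) : Prop :=
  symmetric e /\ irreflexive e.

Definition edges (T : finType) (e : rel T) : {set {set T}} :=
  [set [set x; y] | x in T, y in T & e x y].

Definition max_degree (T : finType) (e : rel T) : nat :=
  (\max_(v : T) #|[set w | e v w]|)%N.

Definition fV (T : finType) (A : finZmodType) (l : T -> A) (a : A) : nat :=
  #|[set v | l v == a]|.

(* f_E(a): number of edges {v1,v2} with l v1 + l v2 = a
   (well defined since A is abelian). *)
Definition fE (T : finType) (e : rel T) (A : finZmodType) (l : T -> A) (a : A)
  : nat :=
  #|[set E0 in edges e | [exists x, exists y,
        [&& e x y, E0 == [set x; y] & l x + l y == a]]]|.

Definition cordial_labeling (T : finType) (e : rel T) (A : finZmodType)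
  (l : T -> A) : Prop :=
  (forall a1 a2 : A, (`|(fV l a1)%:Z - (fV l a2)%:Z| <= 1)%N) /\
  (forall a1 a2 : A, (`|(fE e l a1)%:Z - (fE e l a2)%:Z| <= 1)%N).

Definition A_cordial (T : finType) (e : rel T) (A : finZmodType) : Prop :=
  exists l : T -> A, cordial_labeling e l.

From mathcomp Require Import all_boot all_order all_algebra.
Set Implicit Arguments. Unset Strict Implicit. Unset Printing Implicit Defensive.
Import GRing.Theory.

(* Label the vertices greedily so that all vertex labels are distinct and
   distinct edges get distinct sums; then every f_V(a) and f_E(a) is 0 or 1.
   When v is labeled, a label is ruled out only if it is already used
   (fewer than |V| labels) or if it is t - l(y) for an existing edge sum t and
   a neighbour y of v (at most |E| Delta(G) labels); the hypothesis on |A|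
   leaves a label free. *)

Lemma sum_set2 (T : finType) (A : zmodType) (l : T -> A) (x y : T) :
  x != y -> (\sum_(u in [set x; y]) l u)%R = (l x + l y)%R.
Proof. by move=> xy; rewrite big_setU1 ?big_set1 // in_set1. Qed.

Lemma absz_subn_le1 (m n : nat) :
  (m <= 1)%N -> (n <= 1)%N -> (`|(m%:Z - n%:Z)%R| <= 1)%N.
Proof. by case: m => [|[|]] // _; case: n => [|[|]]. Qed.

Section GreedyLabeling.
Variables (T : finType) (e : rel T) (A : finZmodType).
Hypotheses (e_sym : symmetric e) (e_irr : irreflexive e).

Definition edge_sums_injective (s : seq T) (l : T -> A) : Prop :=
  forall x y z w, x \in s -> y \in s -> z \in s -> w \in s ->
    e x y -> e z w -> (l x + l y = l z + l w)%R ->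
    (x = z /\ y = w) \/ (x = w /\ y = z).

Definition edge_sums (l : T -> A) : {set A} :=
  [set (\sum_(u in E0) l u)%R | E0 : {set T} in edges e].

Lemma mem_edge_sums (l : T -> A) x y : e x y -> (l x + l y)%R \in edge_sums l.
Proof.
move=> exy; apply/imsetP; exists [set x; y].
  by apply/imset2P; exists x y; rewrite ?inE.
by rewrite sum_set2 //; apply: contraTneq exy => ->; rewrite e_irr.
Qed.

(* [edge_sums l] also counts edges with not yet labeled endpoints; forbidding
   too many labels is harmless. *)
Definition forbidden (s : seq T) (v : T) (l : T -> A) : {set A} :=
  l @: [set x in s] :|:
  [set (t - l y)%R | t in edge_sums l, y in [set y | e v y]].

Lemma card_forbidden s v l : v \notin s ->
  (#|forbidden s v l| < #|T| + #|edges e| * max_degree e)%N.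
Proof.
move=> v_new; apply: leq_ltn_trans (leq_card_setU _ _) _.
rewrite -addSn; apply: leq_add.
  apply: leq_ltn_trans (leq_imset_card _ _) _; rewrite -cardsT.
  apply: proper_card; rewrite properT.
  by apply/eqP => /setP/(_ v); rewrite !inE (negbTE v_new).
rewrite curry_imset2X; apply: leq_trans (leq_imset_card _ _) _.
rewrite cardsX; apply: leq_mul; first exact: leq_imset_card.
exact: (leq_bigmax_cond (F := fun v => #|[set w | e v w]|) v).
Qed.

Lemma notin_forbidden s v l a : a \notin forbidden s v l ->
  (forall y, y \in s -> a != l y) /\
  (forall y z w, e v y -> e z w -> (a + l y != l z + l w)%R).
Proof.
rewrite inE negb_or => /andP[a_unused a_fresh]; split.
  by move=> y ys; apply: contraNneq a_unused => ->; apply: imset_f; rewrite inE.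
move=> y z w evy ezw; apply: contraNneq a_fresh => sum_eq.
apply/imset2P; exists (l z + l w)%R y; rewrite ?inE ?mem_edge_sums //.
by rewrite -sum_eq addrK.
Qed.

Lemma exists_notin_forbidden s v l : v \notin s ->
  (#|T| + #|edges e| * max_degree e - 1 < #|A|)%N ->
  exists a, a \notin forbidden s v l.
Proof.
move=> v_new hA.
have lt_forb := card_forbidden l v_new.
have /properP[_ [a _ aF]] : forbidden s v l \proper [set: A].
  rewrite properEcard subsetT cardsT; apply: leq_ltn_trans hA.
  by rewrite subn1 -ltnS prednK // (leq_ltn_trans _ lt_forb).
by exists a.
Qed.

Section Extension.
Variables (s : seq T) (v : T) (l : T -> A) (a : A).
Hypotheses (v_new : v \notin s) (l_inj : {in s &, injective l})
  (a_unused : forall y, y \in s -> a != l y)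
  (a_fresh : forall y z w, e v y -> e z w -> (a + l y != l z + l w)%R).

Local Notation l' := [eta l with v |-> a].

Lemma mem_old u : u \in v :: s -> u != v -> u \in s.
Proof. by rewrite in_cons => /predU1P[->|//]; rewrite eqxx. Qed.

Lemma extend_at : l' v = a.
Proof. by rewrite /= eqxx. Qed.

Lemma extend_old x : x \in s -> l' x = l x.
Proof. by move=> xs /=; rewrite ifN //; apply: contraNneq v_new => <-. Qed.

Lemma extend_injective : {in v :: s &, injective l'}.
Proof.
move=> x y; rewrite !in_cons => /orP[/eqP->|xs] /orP[/eqP->|ys] //.
- by rewrite extend_at extend_old // => /eqP; rewrite (negbTE (a_unused ys)).
- by rewrite extend_at extend_old // => /esym/eqP; rewrite (negbTE (a_unused xs)).
- by rewrite !extend_old //; apply: l_inj.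
Qed.

Lemma extend_sums_at y z w : y \in v :: s -> z \in v :: s -> w \in v :: s ->
  e v y -> e z w -> (l' v + l' y = l' z + l' w)%R ->
  (v = z /\ y = w) \/ (v = w /\ y = z).
Proof.
move=> yvs zvs wvs evy ezw.
have ys : y \in s by apply: mem_old yvs _; apply: contraTneq evy => ->; rewrite e_irr.
case: (eqVneq z v) => [-> | zv].
  by move/addrI => lyw; left; split => //; apply: extend_injective.
case: (eqVneq w v) => [-> | wv].
  by rewrite addrC => /addIr lyz; right; split => //; apply: extend_injective.
have [zs ws] := (mem_old zvs zv, mem_old wvs wv).
rewrite extend_at !extend_old // => sum_eq.
by move: (a_fresh evy ezw); rewrite sum_eq eqxx.
Qed.

Lemma extend_edge_sums_injective :
  edge_sums_injective s l -> edge_sums_injective (v :: s) l'.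
Proof.
move=> l_sums x y z w xs ys zs ws.
case: (eqVneq x v) => [-> | xv]; first exact: extend_sums_at.
case: (eqVneq y v) => [-> | yv].
  rewrite e_sym addrC => evx ezw /(extend_sums_at xs zs ws evx ezw).
  by case=> -[-> ->]; [right | left].
case: (eqVneq z v) => [-> | zv].
  move=> exy evw /esym /(extend_sums_at ws xs ys evw exy).
  by case=> -[-> ->]; [left | right].
case: (eqVneq w v) => [-> | wv].
  move=> exy; rewrite e_sym [(l' z + _)%R]addrC.
  move=> evz /esym /(extend_sums_at zs xs ys evz exy).
  by case=> -[-> ->]; [right | left].
move: xs ys zs ws => /mem_old/(_ xv) xs /mem_old/(_ yv) ys.
move=> /mem_old/(_ zv) zs /mem_old/(_ wv) ws.
by rewrite !extend_old //; apply: l_sums.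
Qed.

End Extension.

Lemma exists_edge_sums_injective_labeling (s : seq T) : uniq s ->
  (#|T| + #|edges e| * max_degree e - 1 < #|A|)%N ->
  exists l : T -> A, {in s &, injective l} /\ edge_sums_injective s l.
Proof.
move=> + hA; elim: s => [_ | v s IHs /= /andP[v_new /IHs[l [l_inj l_sums]]]].
  by exists (fun=> 0%R); split.
have [a /notin_forbidden[a_unused a_fresh]] := exists_notin_forbidden l v_new hA.
exists [eta l with v |-> a]; split.
  exact: extend_injective.
exact: extend_edge_sums_injective.
Qed.

End GreedyLabeling.

Lemma fV_le1 (T : finType) (A : finZmodType) (l : T -> A) (a : A) :
  injective l -> (fV l a <= 1)%N.
Proof.
move=> l_inj; apply/card_le1_eqP => x y; rewrite !inE.
by move=> /eqP <- /eqP /l_inj.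
Qed.

Lemma fE_le1 (T : finType) (e : rel T) (A : finZmodType) (l : T -> A) (a : A) :
  edge_sums_injective e (enum T) l -> (fE e l a <= 1)%N.
Proof.
move=> l_sums; apply/card_le1_eqP => E0 E1; rewrite !inE.
move=> /andP[_ /existsP[x /existsP[y /and3P[exy /eqP-> /eqP sum_xy]]]].
move=> /andP[_ /existsP[z /existsP[w /and3P[ezw /eqP-> /eqP sum_zw]]]].
have := l_sums x y z w; rewrite !mem_enum => /(_ isT isT isT isT exy ezw).
rewrite sum_xy sum_zw => /(_ erefl) [[-> ->] | [-> ->]] //; exact: setUC.
Qed.

Theorem theorem3p2 (T : finType) (e : rel T) (A : finZmodType) :
  simple_graph e ->
  (#|T| + #|edges e| * max_degree e - 1 < #|A|)%N ->
  A_cordial e A.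
Proof.
move=> [e_sym e_irr] hA.
have [l [l_inj l_sums]] :=
  exists_edge_sums_injective_labeling e_sym e_irr (enum_uniq T) hA.
have {}l_inj : injective l by move=> x y; apply: l_inj; rewrite mem_enum.
by exists l; split=> a1 a2; apply: absz_subn_le1; rewrite ?fV_le1 ?fE_le1.
Qed.
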